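(* Suppose $(J,F,Y)$ is a splitting pullback triple with $J:\mathcal X\to\mathcal H$, $F:\mathcal X\to\mathcal E$. Then $J$ and $F$ are partial isometries and $$\mathcal N(F)=\mathcal R(J^* ),\quad \mathcal R(J)=\mathcal H,\qquad \mathcal N(J)=\mathcal R(F^* ),\quad \mathcal R(F)=\mathcal E.$$
   Context: For Hilbert spaces $\mathcal H,\mathcal X,\mathcal E$, a pullback triple $(J,F,Y)$ consists of $J:\mathcal X\to\mathcal H$, $F:\mathcal X\to\mathcal E$ bounded with dense range, $Y:\mathcal H\to\mathcal X$ a completion operator (densely defined injective linear map with dense range), with $\|u\|_{\mathcal X}^2=\|Ju\|^2+\|Fu\|_{\mathcal E}^2$ for all $u\in\mathcal X$ and $JYf=f$ for $f\in\mathcal D(Y)$. The triple is splitting if $F$ is a partial isometry (equivalently $\mathcal X=\mathcal N(J)\oplus\mathcal N(F)$, or $JF^*=0$, or $J\mathcal N(F)$ dense in $\mathcal H$). $\mathcal N,\mathcal R$ denote null space and range. *)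

From mathcomp Require Import all_boot all_order all_algebra.
From mathcomp Require Import all_classical all_reals.
From mathcomp.real_closed Require Import complex.
Set Implicit Arguments. Unset Strict Implicit. Unset Printing Implicit Defensive.
Import Order.TTheory GRing.Theory Num.Theory.
Local Open Scope ring_scope.

Definition is_inner_product (R : realType) (V : lmodType R[i])
    (ip : V -> V -> R[i]) : Prop :=
  [/\ (forall (a : R[i]) (x y z : V), ip (a *: x + y) z = a * ip x z + ip y z),
      (forall x y : V, ip y x = (ip x y)^*),
      (forall x : V, 0 <= ip x x) &
      (forall x : V, ip x x = 0 -> x = 0)].

Definition ipnorm (R : realType) (V : lmodType R[i]) (ip : V -> V -> R[i])
  (x : V) : R[i] := sqrtC (ip x x).

Definition ip_complete (R : realType) (V : lmodType R[i])
    (ip : V -> V -> R[i]) : Prop :=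
  forall u : nat -> V,
    (forall e : R[i], 0 < e -> exists N, forall m n, (N <= m)%N -> (N <= n)%N ->
        ipnorm ip (u m - u n) < e) ->
    exists l : V, forall e : R[i], 0 < e -> exists N, forall n, (N <= n)%N ->
        ipnorm ip (u n - l) < e.

Record hilbert (R : realType) := Hilbert {
  hcar :> lmodType R[i];
  hinner : hcar -> hcar -> R[i];
  hinner_ax : @is_inner_product R hcar hinner;
  hcomplete : @ip_complete R hcar hinner }.

Definition hnorm (R : realType) (V : hilbert R) (x : V) : R[i] :=
  @ipnorm R V (@hinner R V) x.


Definition is_linear (R : realType) (V W : hilbert R) (T : V -> W) : Prop :=
  forall (a : R[i]) (x y : V), T (a *: x + y) = a *: T x + T y.

Definition bounded_op (R : realType) (V W : hilbert R) (T : V -> W) : Prop :=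
  is_linear T /\ exists M : R[i], forall x : V, hnorm (T x) <= M * hnorm x.

Definition dense_in (R : realType) (V : hilbert R) (A : V -> Prop) : Prop :=
  forall (x : V) (e : R[i]), 0 < e -> exists y, A y /\ hnorm (x - y) < e.

(* range T : the library's [range T] = [set y | exists x, T x = y] *)

Definition kernel (R : realType) (V W : hilbert R) (T : V -> W) : V -> Prop :=
  fun x => T x = 0.

Definition is_adjoint (R : realType) (V W : hilbert R) (T : V -> W)
    (Tadj : W -> V) : Prop :=
  forall (x : V) (y : W), hinner (T x) y = hinner x (Tadj y).

Definition orth (R : realType) (V : hilbert R) (A : V -> Prop) : V -> Prop :=
  fun x => forall y, A y -> hinner x y = 0.

Definition partial_isometry (R : realType) (V W : hilbert R) (T : V -> W) : Prop :=
  bounded_op T /\ forall x, orth (kernel T) x -> hnorm (T x) = hnorm x.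

Definition completion_operator (R : realType) (H X : hilbert R)
    (D : H -> Prop) (Y : H -> X) : Prop :=
  D 0 /\ (forall (a : R[i]) f g, D f -> D g -> D (a *: f + g)) /\
      dense_in D /\
      (forall (a : R[i]) f g, D f -> D g -> Y (a *: f + g) = a *: Y f + Y g) /\
      (forall f g, D f -> D g -> Y f = Y g -> f = g) /\
      dense_in (fun x => exists f, D f /\ Y f = x).

Definition pullback_triple (R : realType) (H X E : hilbert R)
    (J : X -> H) (F : X -> E) (D : H -> Prop) (Y : H -> X) : Prop :=
  bounded_op J /\ dense_in (range J) /\
      bounded_op F /\ dense_in (range F) /\
      completion_operator D Y /\
      (forall u : X, hnorm u ^+ 2 = hnorm (J u) ^+ 2 + hnorm (F u) ^+ 2) /\
      (forall f, D f -> J (Y f) = f).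

Definition splitting_pullback_triple (R : realType) (H X E : hilbert R)
    (J : X -> H) (F : X -> E) (D : H -> Prop) (Y : H -> X) : Prop :=
  pullback_triple J F D Y /\ partial_isometry F.

(** The norm identity [|u|^2 = |Ju|^2 + |Fu|^2] polarizes to [J*J + F*F = 1].
    If [F] is a partial isometry, every [F* e] lies in the orthogonal complement
    of [N(F)], where [F] preserves norms, so [|J F* e| = 0]: [J F* = 0] and by
    adjunction [F J* = 0].  Then [u = J*Ju + F*Fu] shows [N(F) = R(J* )] and
    [N(J) = R(F* )], and [J] is isometric on [N(J)^⊥ ⊆ N(F)].  Finally [J] maps the
    subspace [N(F)] isometrically onto [R(J)], so [R(J)] is complete, hence
    closed, and being dense it is all of [H]; symmetrically for [F]. *)

From mathcomp Require Import all_boot all_order all_algebra.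
From mathcomp Require Import all_classical all_reals.
From mathcomp.real_closed Require Import complex.
From mathcomp Require Import ring.
Import Order.TTheory GRing.Theory Num.Theory.
Local Open Scope ring_scope.

Section PullbackTriple.
Context {R : realType}.
Local Notation C := (R[i]).

Section InnerProduct.
Context {V : hilbert R}.
Local Notation ip := (@hinner R V).

Lemma ipZDl (a : C) (x y z : V) : ip (a *: x + y) z = a * ip x z + ip y z.
Proof. by have [h _ _ _] := hinner_ax V; apply: h. Qed.

Lemma ipC (x y : V) : ip y x = (ip x y)^*.
Proof. by have [_ h _ _] := hinner_ax V; apply: h. Qed.

Lemma ip_ge0 (x : V) : 0 <= ip x x.
Proof. by have [_ _ h _] := hinner_ax V; apply: h. Qed.

Lemma ip_eq0 (x : V) : ip x x = 0 -> x = 0.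
Proof. by have [_ _ _ h] := hinner_ax V; apply: h. Qed.

Lemma ip0l (z : V) : ip 0 z = 0.
Proof.
have := ipZDl 1 0 0 z; rewrite scale1r addr0 mul1r => h.
by apply: (addrI (ip 0 z)); rewrite addr0 -h.
Qed.

Lemma ipDl (x y z : V) : ip (x + y) z = ip x z + ip y z.
Proof. by rewrite -[x]scale1r ipZDl mul1r scale1r. Qed.

Lemma ipZl (a : C) (x z : V) : ip (a *: x) z = a * ip x z.
Proof. by rewrite -[a *: x]addr0 ipZDl ip0l addr0. Qed.

Lemma ipNl (x z : V) : ip (- x) z = - ip x z.
Proof. by rewrite -scaleN1r ipZl mulN1r. Qed.

Lemma ipBl (x y z : V) : ip (x - y) z = ip x z - ip y z.
Proof. by rewrite ipDl ipNl. Qed.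

Lemma ip0r (z : V) : ip z 0 = 0.
Proof. by rewrite ipC ip0l conjC0. Qed.

Lemma ipDr (x y z : V) : ip z (x + y) = ip z x + ip z y.
Proof. by rewrite ipC ipDl rmorphD /= -!ipC. Qed.

Lemma ipZr (a : C) (x z : V) : ip z (a *: x) = a^* * ip z x.
Proof. by rewrite ipC ipZl rmorphM /= -ipC. Qed.

Lemma ipBr (x y z : V) : ip z (x - y) = ip z x - ip z y.
Proof. by rewrite ipC ipBl rmorphB /= -!ipC. Qed.

Lemma ipNN (x y : V) : ip (x - y) (x - y) = ip (y - x) (y - x).
Proof. by rewrite -opprB ipNl ipC ipNl rmorphN /= -ipC opprK. Qed.

Lemma ip_inj (x y : V) : (forall z, ip x z = ip y z) -> x = y.
Proof.
move=> h; apply/eqP; rewrite -subr_eq0; apply/eqP/ip_eq0.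
by rewrite ipBl h subrr.
Qed.

Lemma hnorm_sqr (x : V) : hnorm x ^+ 2 = ip x x.
Proof. by rewrite /hnorm /ipnorm sqrtCK. Qed.

Lemma hnorm_ltE {x : V} {e : C} : 0 < e -> (hnorm x < e) = (ip x x < e ^+ 2).
Proof.
move=> e0; rewrite -hnorm_sqr ltr_pXn2r // qualifE /= ?(ltW e0) //.
by rewrite /hnorm /ipnorm sqrtC_ge0 ip_ge0.
Qed.

Lemma parallelogram_le (a b : V) :
  ip (a - b) (a - b) <= 2 * ip a a + 2 * ip b b.
Proof.
have <- : ip (a - b) (a - b) + ip (a + b) (a + b) = 2 * ip a a + 2 * ip b b.
  by rewrite !ipBl !ipDl !ipBr !ipDr; ring.
by rewrite lerDl ip_ge0.
Qed.

Lemma ip_small_eq0 (x : V) : (forall e : C, 0 < e -> ip x x < e) -> x = 0.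
Proof.
move=> small; apply: ip_eq0; apply/eqP; apply: contraT => x0.
have x_gt0 : 0 < ip x x by rewrite lt_def x0 ip_ge0.
by have := small _ x_gt0; rewrite ltxx.
Qed.

End InnerProduct.

Section Linear.
Context {V W : hilbert R} {T : V -> W}.
Hypothesis linT : is_linear T.

Lemma lin0 : T 0 = 0.
Proof.
have := linT 1 0 0; rewrite !scale1r addr0 => h.
by apply: (addrI (T 0)); rewrite addr0 -h.
Qed.

Lemma linD x y : T (x + y) = T x + T y.
Proof. by rewrite -{1}[x]scale1r linT scale1r. Qed.

Lemma linZ a x : T (a *: x) = a *: T x.
Proof. by rewrite -[a *: x]addr0 linT lin0 addr0. Qed.

Lemma linB x y : T (x - y) = T x - T y.
Proof. by rewrite linD -scaleN1r linZ scaleN1r. Qed.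

End Linear.

Lemma adj0 {V W : hilbert R} {T : V -> W} {Tadj : W -> V} : is_adjoint T Tadj -> Tadj 0 = 0.
Proof. by move=> adjT; apply: ip_inj => z; rewrite ip0l ipC -adjT ip0r conjC0. Qed.

Lemma adjC {V W : hilbert R} {T : V -> W} {Tadj : W -> V} : is_adjoint T Tadj ->
  forall x y, hinner (Tadj y) x = hinner y (T x).
Proof. by move=> adjT x y; rewrite ipC -adjT -ipC. Qed.

Lemma sesquilinear_diag0 (V : lmodType C) (B : V -> V -> C) :
    (forall x y z, B (x + y) z = B x z + B y z) ->
    (forall x y z, B z (x + y) = B z x + B z y) ->
    (forall a x z, B (a *: x) z = a * B x z) ->
    (forall a x z, B z (a *: x) = a^* * B z x) ->
  (forall x, B x x = 0) -> forall x y, B x y = 0.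
Proof.
move=> Dl Dr Zl Zr B0 x y.
have sym : B x y + B y x = 0.
  by have := B0 (x + y); rewrite Dl !Dr !B0 add0r addr0.
have skew : B x ('i *: y) + B ('i *: y) x = 0.
  by have := B0 (x + 'i *: y); rewrite Dl !Dr !B0 add0r addr0.
have Byx : B y x = - B x y by apply/eqP; rewrite -addr_eq0 addrC sym.
move/eqP: skew; rewrite Zl Zr conjCi Byx mulrN mulNr -opprD oppr_eq0 -mulrDr.
rewrite mulf_eq0 (negPf (neq0Ci C)) /= -mulr2n mulrn_eq0 /=.
by move/eqP.
Qed.

Lemma inv_nat_lt {c : C} :
  0 < c -> exists N, forall n, (N <= n)%N -> (n.+1%:R : C)^-1 < c.
Proof.
move=> c0; have [k ck] := complex_realP _ (gtr0_real c0); rewrite ck in c0 *.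
have k0 : 0 < k by move: c0; rewrite ltcE /= eqxx.
exists (Num.Def.archi_bound k^-1) => n hn.
have kn : k^-1 < n.+1%:R.
  apply: (lt_le_trans (archi_boundP _)); first by rewrite invr_ge0 ltW.
  by rewrite ler_nat (leq_trans hn).
rewrite -(@rmorph_nat _ _ (@real_complex R)) -rmorphV ?unitfE ?pnatr_eq0 //= ltcR.
by rewrite -(invrK k) ltf_pV2 // qualifE /= ?invr_gt0 ?ltr0n.
Qed.

Lemma quarter_sum_lt (a b e : C) :
  0 < e -> a < e / 4 -> b < e / 4 -> 2 * a + 2 * b < e.
Proof.
move=> e0 ha hb; have -> : e = 2 * (e / 4) + 2 * (e / 4) by field.
by apply: ltrD; rewrite ltr_pM2l ?ltr0n.
Qed.

Lemma dense_seq {V : hilbert R} {S : V -> Prop} : dense_in S ->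
  forall k : V, exists u : nat -> V,
    forall n, S (u n) /\ hinner (k - u n) (k - u n) < (n.+1%:R)^-1.
Proof.
move=> dS k.
have approx n : exists y, S y /\ hinner (k - y) (k - y) < (n.+1%:R)^-1.
  have e0 : 0 < sqrtC ((n.+1%:R : C)^-1) by rewrite sqrtC_gt0 invr_gt0 ltr0n.
  have [y [Sy ky]] := dS k _ e0; exists y; split=> //.
  by move: ky; rewrite hnorm_ltE // sqrtCK.
by have [u hu] := choice approx; exists u.
Qed.

(* Completeness of [X] transfers to [R(A)] through the isometric copy of [Z]. *)
Lemma dense_range_surj (X K : hilbert R) (A : X -> K) (Z : X -> Prop) :
    is_linear A ->
    (forall u, hinner (A u) (A u) <= hinner u u) ->
    (forall z z', Z z -> Z z' -> Z (z - z')) ->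
    (forall z, Z z -> hinner (A z) (A z) = hinner z z) ->
    (forall x, exists2 z, Z z & A z = A x) ->
  dense_in (range A) -> forall k, range A k.
Proof.
move=> linA contrA subZ isoA onZ dA k.
have [u approx] := dense_seq dA k.
have lift n : exists z, Z z /\ A z = u n.
  have [[x _ <-] _] := approx n.
  by have [z Zz Azx] := onZ x; exists z.
have [z hz] := choice lift.
have err n : hinner (k - A (z n)) (k - A (z n)) < (n.+1%:R)^-1.
  by rewrite (hz n).2; exact: (approx n).2.
have cauchy e : 0 < e -> exists N, forall m n, (N <= m)%N -> (N <= n)%N ->
    ipnorm (@hinner R X) (z m - z n) < e.
  move=> e0; have e40 : 0 < e ^+ 2 / 4 by rewrite divr_gt0 ?exprn_gt0 ?ltr0n.
  have [N hN] := inv_nat_lt e40; exists N => m n hm hn.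
  have Zmn : Z (z m - z n) by apply: subZ; [exact: (hz m).1 | exact: (hz n).1].
  rewrite (hnorm_ltE e0) -isoA // (linB linA).
  have -> : A (z m) - A (z n) = (k - A (z n)) - (k - A (z m)).
    by rewrite opprB [RHS]addrC -addrA addKr.
  apply: (le_lt_trans (parallelogram_le _ _)).
  by apply: quarter_sum_lt; rewrite ?exprn_gt0 // (lt_trans (err _)) ?hN.
have [l lim_l] := hcomplete cauchy; exists l => //.
apply/eqP; rewrite -subr_eq0; apply/eqP/ip_small_eq0 => d d0.
have d40 : 0 < d / 4 by rewrite divr_gt0 ?ltr0n.
have [N1 hN1] := inv_nat_lt d40.
have s0 : 0 < sqrtC (d / 4) by rewrite sqrtC_gt0.
have [N2 hN2] := lim_l _ s0.
pose n := maxn N1 N2.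
have -> : A l - k = A (l - z n) - (k - A (z n)) by rewrite (linB linA) opprB addrA subrK.
apply: (le_lt_trans (parallelogram_le _ _)); apply: quarter_sum_lt => //.
  apply: (le_lt_trans (contrA _)); rewrite ipNN -(sqrtCK (d / 4)) -hnorm_ltE //.
  exact: hN2 (leq_maxr _ _).
exact: lt_trans (err n) (hN1 n (leq_maxl _ _)).
Qed.

Section AdjointPair.
Context {X K L : hilbert R} {A : X -> K} {B : X -> L}.
Context {Aadj : K -> X} {Badj : L -> X}.
Hypotheses (lA : is_linear A) (lB : is_linear B).
Hypotheses (adjA : is_adjoint A Aadj) (adjB : is_adjoint B Badj).
Hypothesis normAB :
  forall u, hinner u u = hinner (A u) (A u) + hinner (B u) (B u).

Lemma adj_gram_sum x : Aadj (A x) + Badj (B x) = x.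
Proof.
pose G x y := hinner (A x) (A y) + hinner (B x) (B y) - hinner x y.
have G0 : forall x y, G x y = 0.
  apply: sesquilinear_diag0 => [x1 y1 z|x1 y1 z|a x1 z|a x1 z|x1].
  - by rewrite /G !(linD lA) !(linD lB) !ipDl; ring.
  - by rewrite /G !(linD lA) !(linD lB) !ipDr; ring.
  - by rewrite /G !(linZ lA) !(linZ lB) !ipZl; ring.
  - by rewrite /G !(linZ lA) !(linZ lB) !ipZr; ring.
  - by rewrite /G normAB subrr.
apply: ip_inj => y; rewrite ipDl (adjC adjA) (adjC adjB).
by apply/eqP; rewrite -subr_eq0; apply/eqP/G0.
Qed.

Lemma adj_comp0_swap : (forall e, A (Badj e) = 0) -> forall h, B (Aadj h) = 0.
Proof.
move=> ABadj0 h; apply: ip_inj => e.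
by rewrite ip0l adjB (adjC adjA) ABadj0 ip0r.
Qed.

Lemma comp_adj0_of_partial_isometry :
  partial_isometry B -> forall e, A (Badj e) = 0.
Proof.
move=> [_ isoB] e.
have orthBadj : orth (kernel B) (Badj e).
  by move=> y By0; rewrite (adjC adjB) By0 ip0r.
have /(congr1 (fun r => r ^+ 2)) := isoB _ orthBadj; rewrite !hnorm_sqr => BB.
apply: ip_eq0; apply: (addIr (hinner (Badj e) (Badj e))).
by rewrite add0r -{1}BB -normAB.
Qed.

Hypothesis BAadj0 : forall h, B (Aadj h) = 0.

Lemma kernel_eq_range_adj u : kernel B u <-> range Aadj u.
Proof.
split=> [Bu0 | [h _ <-]]; last exact: BAadj0.
by exists (A u) => //; rewrite -[RHS]adj_gram_sum Bu0 (adj0 adjB) addr0.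
Qed.

Lemma range_full : dense_in (range A) -> forall k, range A k.
Proof.
move=> dA k; apply: (@dense_range_surj _ _ A (kernel B)).
- exact: lA.
- by move=> v; rewrite [leRHS]normAB lerDl ip_ge0.
- by move=> z z' Bz0 Bz'0; rewrite /kernel (linB lB) Bz0 Bz'0 subrr.
- by move=> z Bz0; rewrite normAB Bz0 ip0l addr0.
- move=> x; exists (Aadj (A x)); first exact: BAadj0.
  have ABadj0 e : A (Badj e) = 0.
    by apply: ip_inj => h; rewrite ip0l adjA (adjC adjB) BAadj0 ip0r.
  by rewrite -{2}(adj_gram_sum x) (linD lA) ABadj0 addr0.
- exact: dA.
Qed.

End AdjointPair.

Lemma partial_isometry_of_pair {X K L : hilbert R} {A : X -> K} {B : X -> L}
    {Badj : L -> X} :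
  bounded_op A -> is_adjoint B Badj ->
  (forall u, hinner u u = hinner (A u) (A u) + hinner (B u) (B u)) ->
  (forall e, A (Badj e) = 0) -> partial_isometry A.
Proof.
move=> bA adjB normAB ABadj0; split=> // x orthx.
have Bx0 : B x = 0 by apply: ip_inj => e; rewrite ip0l adjB orthx.
by rewrite /hnorm /ipnorm [in RHS]normAB Bx0 ip0l addr0.
Qed.

End PullbackTriple.

Theorem mainTheorem7 (R : realType) (H X E : hilbert R)
    (J : X -> H) (F : X -> E) (D : H -> Prop) (Y : H -> X)
    (Jadj : H -> X) (Fadj : E -> X) :
  splitting_pullback_triple J F D Y ->
  is_adjoint J Jadj -> is_adjoint F Fadj ->
  partial_isometry J /\ partial_isometry F /\
      (forall u : X, kernel F u <-> range Jadj u) /\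
      (forall f : H, range J f) /\
      (forall u : X, kernel J u <-> range Fadj u) /\
      (forall e : E, range F e).
Proof.
move=> [[bJ [dJ [bF [dF [_ [normJF _]]]]]] piF] adjJ adjF.
have normJF' u : hinner u u = hinner (J u) (J u) + hinner (F u) (F u).
  by rewrite -[LHS]hnorm_sqr normJF !hnorm_sqr.
have normFJ' u : hinner u u = hinner (F u) (F u) + hinner (J u) (J u).
  by rewrite addrC normJF'.
have JFadj0 := comp_adj0_of_partial_isometry adjF normJF' piF.
have FJadj0 := adj_comp0_swap adjJ adjF JFadj0.
split; first exact: (partial_isometry_of_pair bJ adjF normJF' JFadj0).
split=> //; split.
  exact: (kernel_eq_range_adj bJ.1 bF.1 adjJ adjF normJF' FJadj0).
split; first exact: (range_full bJ.1 bF.1 adjJ adjF normJF' FJadj0 dJ).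
split; first exact: (kernel_eq_range_adj bF.1 bJ.1 adjF adjJ normFJ' JFadj0).
exact: (range_full bF.1 bJ.1 adjF adjJ normFJ' JFadj0 dF).
Qed.
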